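(* Let $I\subseteq\mathfrak{M}$ be an ideal of $P$, let $Z=\{z_1,\dots,z_s\}$ be a set of distinct indeterminates in $X$, and let $\sigma,\sigma'$ be $Z$-separating term orderings for $I$. Then the $K$-algebra isomorphisms $\Phi,\Phi':P/I\to\widehat P/(I\cap\widehat P)$ obtained from $\sigma$ and $\sigma'$, respectively, are equal.
   Context: $K$ is a field, $P=K[x_1,\dots,x_n]$, $X=\{x_1,\dots,x_n\}$, $\mathfrak{M}=\langle x_1,\dots,x_n\rangle$, $\widehat P=K[X\setminus Z]$. For $f\in P$, $\mathrm{indets}(f)$ is the set of indeterminates dividing some term in the support of $f$. For $f\in\mathfrak{M}$ with nonzero degree-one part, $z$ an indeterminate occurring in that degree-one part, and $c\neq 0$ the coefficient of $z$ in $f$, set $\mathrm{tail}_z(f)=z-\frac1cf$; $f$ is $z$-separating if $z\notin\mathrm{indets}(\mathrm{tail}_z(f))$. A tuple $(f_1,\dots,f_s)$ of nonzero elements of $\mathfrak M$ is coherently $Z$-separating if each $f_i$ is $z_i$-separating and $z_i\notin\mathrm{indets}(f_j)$ for $j\ne i$. A term ordering $\sigma$ is $Z$-separating for $I$ if there are $f_1,\dots,f_s\in I\setminus\{0\}$ with $z_i=\mathrm{LT}_\sigma(f_i)$ and $(f_1,\dots,f_s)$ coherently $Z$-separating. For such $\sigma$, the reduced $\sigma$-Gröbner basis of $I$ has the form $\{f_1,\dots,f_s,g_1,\dots,g_t\}$ with $\mathrm{LT}_\sigma(f_i)=z_i$, $\mathrm{LC}_\sigma(f_i)=1$ and $g_j\in\widehat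 P$; the isomorphism associated with $\sigma$ is $\Phi:P/I\to\widehat P/(I\cap\widehat P)$ induced by $x\mapsto x$ for $x\in X\setminus Z$ and $z_i\mapsto\mathrm{tail}_{z_i}(f_i)$. *)

From HB Require Import structures.
From mathcomp Require Import all_boot all_order all_algebra.
From mathcomp Require Import mpoly.
Set Implicit Arguments. Unset Strict Implicit. Unset Printing Implicit Defensive.
Import Order.TTheory GRing.Theory.
Local Open Scope ring_scope.

Section Defs.
Variables (K : fieldType) (n : nat).
Local Notation P := {mpoly K[n]}.
Local Notation term := 'X_{1..n}.

Definition tdvd (m1 m2 : term) : bool := lem m1 m2.

Definition term_ordering (le : rel term) : Prop :=
  [/\ reflexive le, antisymmetric le, transitive le, total le &
      ((forall m, le 0%MM m) /\
       (forall m1 m2 m3, le m1 m2 -> le (m1 + m3)%MM (m2 + m3)%MM))].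

Definition is_LT (le : rel term) (f : P) (m : term) : Prop :=
  m \in msupp f /\ forall m', m' \in msupp f -> le m' m.

Definition is_ideal (I : pred P) : Prop :=
  [/\ 0 \in I, (forall a b, a \in I -> b \in I -> a + b \in I) &
      (forall r a, a \in I -> r * a \in I)].

(* membership in the maximal ideal M = <x_1,...,x_n> *)
Definition in_M (f : P) : bool := f@_0%MM == 0.

Definition in_indets (z : 'I_n) (f : P) : bool :=
  has (fun m : term => 0 < m z)%N (msupp f).

Definition in_hatP (Z : {set 'I_n}) (f : P) : Prop :=
  forall z, z \in Z -> ~~ in_indets z f.

Definition tail (z : 'I_n) (f : P) : P := 'X_z - (f@_(mnm1 z))^-1 *: f.

Definition z_separating (z : 'I_n) (f : P) : Prop :=
  [/\ in_M f, f@_(mnm1 z) != 0 & ~~ in_indets z (tail z f)].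

Definition coherently_separating (Z : {set 'I_n}) (F : 'I_n -> P) : Prop :=
  forall z, z \in Z ->
    [/\ F z != 0, in_M (F z), z_separating z (F z) &
        forall z', z' \in Z -> z' != z -> ~~ in_indets z (F z')].

Definition Z_separating_ordering (le : rel term) (I : pred P)
    (Z : {set 'I_n}) : Prop :=
  exists F : 'I_n -> P,
    (forall z, z \in Z -> F z \in I /\ is_LT le (F z) (mnm1 z)) /\
    coherently_separating Z F.

Definition reduced_GB (le : rel term) (I : pred P) (G : seq P) : Prop :=
  [/\ forall g, g \in G -> g \in I,
      (forall f, f \in I -> f != 0 -> exists2 g, g \in G &
          exists mg mf, [/\ is_LT le g mg, is_LT le f mf & tdvd mg mf]),
      (forall g, g \in G -> exists m, is_LT le g m /\ g@_m = 1) &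
      (forall g g', g \in G -> g' \in G -> forall m m',
          m \in msupp g -> is_LT le g' m' -> tdvd m' m -> g = g' /\ m = m')].

(* The lift P -> hat P of the isomorphism associated with the family F
   (F z = element of the reduced GB with leading term z):
   x |-> x for x notin Z, z |-> tail_z(F z). *)
Definition Phi_lift (Z : {set 'I_n}) (F : 'I_n -> P) (p : P) : P :=
  p \mPo [tuple (if i \in Z then tail i (F i) else 'X_i) | i < n].

End Defs.

From HB Require Import structures.
From mathcomp Require Import all_boot all_order all_algebra.
From mathcomp Require Import mpoly.
Set Implicit Arguments. Unset Strict Implicit. Unset Printing Implicit Defensive.
Import Order.TTheory GRing.Theory.
Local Open Scope ring_scope.

(* Let F (resp. F') pick, for each z in Z, the element of the
   reduced sigma- (resp. sigma'-) Groebner basis with leading term z.  Both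
   lifts Phi_lift Z F and Phi_lift Z F' are substitutions x |-> x (x notin Z),
   z |-> tail_z(F z), and the claim is that they agree modulo I and land in
   hat P = K[X \ Z].
   - hat P is a subring of P (a subring-closed predicate), hence is stable
     under substituting elements of hat P into any polynomial.
   - Substitution respects congruence modulo an ideal.
   - For a reduced Groebner basis, F z is monic, so tail_z(F z) = z - F z is
     congruent to z modulo I; and reducedness forbids any term of F z other
     than z to be divisible by some z' in Z, so tail_z(F z) lies in hat P.
   Hence Phi_lift Z F p is congruent to p modulo I and lies in hat P, and the
   same holds for F'; subtracting gives the theorem.  The Z-separating and
   in_M hypotheses of the theorem only serve to guarantee that such F and F'
   exist; the argument itself does not need them. *)

Section HatSubring.
Variables (R : comNzRingType) (n : nat) (Z : {set 'I_n}).
Local Notation P := {mpoly R[n]}.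

Definition hat_term (m : 'X_{1..n}) : bool := [forall z in Z, m z == 0%N].

Definition hatPoly_pred (f : P) : bool := all hat_term (msupp f).
Arguments hatPoly_pred _ /.
Definition hatPoly := [qualify a f | hatPoly_pred f].

Lemma hatPolyP (f : P) :
  reflect (forall m z, m \in msupp f -> z \in Z -> m z = 0%N) (f \is a hatPoly).
Proof.
apply: (iffP allP) => [hf m z /hf /forallP /(_ z) /implyP hz /hz /eqP //|hf m mf].
by apply/forall_inP => z zZ; rewrite (hf m z mf zZ).
Qed.

Lemma hatPolyC (c : R) : c%:MP \is a hatPoly.
Proof.
apply/hatPolyP => m z; rewrite msuppC; case: eqP => // _.
by rewrite inE => /eqP -> _; rewrite mnm0E.
Qed.

(* hat P is a subring: supports of differences and products are built from
   the supports of the operands, and sums of Z-free exponents are Z-free. *)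
Lemma hatPoly_subring_closed : subring_closed hatPoly.
Proof.
split; first exact: (hatPolyC 1).
  move=> f g /hatPolyP hf /hatPolyP hg; apply/hatPolyP => m z.
  by move/msuppB_le; rewrite mem_cat => /orP [mf|mg]; [apply: hf mf | apply: hg mg].
move=> f g /hatPolyP hf /hatPolyP hg; apply/hatPolyP => m z.
case/msuppM_le/allpairsP => -[m1 m2] /= [m1f m2g ->] zZ.
by rewrite mnmDE (hf _ _ m1f zZ) (hg _ _ m2g zZ).
Qed.

HB.instance Definition _ :=
  GRing.isSubringClosed.Build P hatPoly_pred hatPoly_subring_closed.

Lemma hatPolyX (i : 'I_n) : i \notin Z -> 'X_i \is a hatPoly.
Proof.
move=> iZ; apply/hatPolyP => m z; rewrite msuppX inE => /eqP -> zZ.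
by rewrite mnm1E; case: eqP => // eiz; rewrite eiz zZ in iZ.
Qed.

Lemma hatPoly_comp (p : P) (t : n.-tuple P) :
  (forall i, tnth t i \is a hatPoly) -> p \mPo t \is a hatPoly.
Proof.
move=> ht; rewrite comp_mpolyE rpred_sum // => m _.
by rewrite -mul_mpolyC rpredM ?hatPolyC // rpred_prod // => i _; rewrite rpredX.
Qed.

End HatSubring.

Arguments hatPoly {R n} Z.

Lemma hatPoly_in_hatP (K : fieldType) (n : nat) (Z : {set 'I_n}) (f : {mpoly K[n]}) :
  f \is a hatPoly Z -> in_hatP Z f.
Proof.
move=> /hatPolyP hf z zZ; apply/hasPn => m mf.
by rewrite (hf m z mf zZ).
Qed.

Section CongruenceModIdeal.
Variables (K : fieldType) (n : nat) (I : pred {mpoly K[n]}).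
Hypothesis idealI : is_ideal I.
Local Notation P := {mpoly K[n]}.

Lemma ideal_add (a b : P) : a \in I -> b \in I -> a + b \in I.
Proof. by case: idealI => _ hD _; apply: hD. Qed.

Lemma ideal_mul (r a : P) : a \in I -> r * a \in I.
Proof. by case: idealI => _ _ hM; apply: hM. Qed.

Lemma ideal_opp (a : P) : a \in I -> - a \in I.
Proof. by rewrite -mulN1r; apply: ideal_mul. Qed.

Definition congI (a b : P) : bool := a - b \in I.

Lemma congI_refl (a : P) : congI a a.
Proof. by rewrite /congI subrr; case: idealI. Qed.

Lemma congI_common (a b c : P) : congI a c -> congI b c -> congI a b.
Proof.
rewrite /congI => hac hbc.
have -> : a - b = (a - c) + - (b - c) by rewrite opprB addrA subrK.
by apply: ideal_add => //; apply: ideal_opp.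
Qed.

Lemma congI_add (a1 a2 b1 b2 : P) :
  congI a1 a2 -> congI b1 b2 -> congI (a1 + b1) (a2 + b2).
Proof.
by rewrite /congI opprD addrACA; apply: ideal_add.
Qed.

Lemma congI_mul (a1 a2 b1 b2 : P) :
  congI a1 a2 -> congI b1 b2 -> congI (a1 * b1) (a2 * b2).
Proof.
rewrite /congI => h1 h2.
have -> : a1 * b1 - a2 * b2 = b1 * (a1 - a2) + a2 * (b1 - b2).
  by rewrite !mulrBr [b1 * a1]mulrC [b1 * a2]mulrC addrA subrK.
by apply: ideal_add; apply: ideal_mul.
Qed.

Lemma congI_exp (a b : P) (k : nat) : congI a b -> congI (a ^+ k) (b ^+ k).
Proof.
move=> h; elim: k => [|k IH]; first by rewrite !expr0 congI_refl.
by rewrite !exprS congI_mul.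
Qed.

Lemma congI_comp (p : P) (t t' : n.-tuple P) :
  (forall i, congI (tnth t i) (tnth t' i)) -> congI (p \mPo t) (p \mPo t').
Proof.
move=> ht; rewrite !comp_mpolyE.
apply: (big_ind2 congI (congI_refl 0) congI_add) => m _.
rewrite /congI -scalerBr -mul_mpolyC; apply: ideal_mul.
by apply: (big_ind2 congI (congI_refl 1) congI_mul) => i _; apply: congI_exp.
Qed.

End CongruenceModIdeal.

Lemma LT_unique (K : fieldType) (n : nat) (le : rel 'X_{1..n})
    (f : {mpoly K[n]}) (m m' : 'X_{1..n}) :
  term_ordering le -> is_LT le f m -> is_LT le f m' -> m = m'.
Proof. by case=> _ anti _ _ _ [mf lem] [m'f lem']; apply: anti; rewrite lem ?lem'. Qed.

Section ReducedBasisTails.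
Variables (K : fieldType) (n : nat) (I : pred {mpoly K[n]}) (Z : {set 'I_n}).
Variables (le : rel 'X_{1..n}) (G : seq {mpoly K[n]}) (F : 'I_n -> {mpoly K[n]}).
Hypothesis idealI : is_ideal I.
Hypothesis orderingLe : term_ordering le.
Hypothesis reducedG : reduced_GB le I G.
Hypothesis leadF : forall z, z \in Z -> F z \in G /\ is_LT le (F z) (mnm1 z).

Lemma reduced_monic (z : 'I_n) : z \in Z -> (F z)@_(mnm1 z) = 1.
Proof.
move=> zZ; have [FzG LTz] := leadF zZ; have [_ _ monicG _] := reducedG.
have [m [LTm cm]] := monicG _ FzG.
by rewrite -(LT_unique orderingLe LTm LTz).
Qed.

Lemma tail_reduced (z : 'I_n) : z \in Z -> tail z (F z) = 'X_z - F z.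
Proof. by move=> zZ; rewrite /tail reduced_monic // invr1 scale1r. Qed.

Lemma tail_congI (z : 'I_n) : z \in Z -> congI I (tail z (F z)) 'X_z.
Proof.
move=> zZ; have [inG _ _ _] := reducedG.
rewrite /congI tail_reduced // addrAC subrr add0r.
by apply: (ideal_opp idealI); apply: inG; case: (leadF zZ).
Qed.

(* A term of F z other than z divisible by some z' in Z would, by
   reducedness, be the leading term of F z' = F z, i.e. z itself. *)
Lemma tail_hatPoly (z : 'I_n) : z \in Z -> tail z (F z) \is a hatPoly Z.
Proof.
move=> zZ; have [FzG LTz] := leadF zZ; have [_ _ _ reduced] := reducedG.
apply/hatPolyP => m z' mtail z'Z; apply/eqP; apply: contraT => mz'.
move: mtail; rewrite tail_reduced // mcoeff_msupp mcoeffB mcoeffX.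
have [<- | mz] := eqVneq (mnm1 z) m.
  by rewrite reduced_monic // subrr eqxx.
rewrite sub0r oppr_eq0 -mcoeff_msupp => mF.
have [Fz'G LTz'] := leadF z'Z.
have dvd : tdvd (mnm1 z') m by rewrite /tdvd lep1mP.
have [eqF eqm] := reduced _ _ FzG Fz'G _ _ mF LTz' dvd.
by rewrite -eqF in LTz'; rewrite eqm (LT_unique orderingLe LTz' LTz) eqxx in mz.
Qed.

Lemma Phi_lift_congI (p : {mpoly K[n]}) : congI I (Phi_lift Z F p) p.
Proof.
rewrite -[X in congI _ _ X](comp_mpoly_id p).
apply: (congI_comp idealI) => i; rewrite !tnth_mktuple.
by case: ifP => iZ; [apply: tail_congI | apply: congI_refl].
Qed.

Lemma Phi_lift_hatPoly (p : {mpoly K[n]}) : Phi_lift Z F p \is a hatPoly Z.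
Proof.
apply: hatPoly_comp => i; rewrite tnth_mktuple.
by case: ifPn => iZ; [apply: tail_hatPoly | apply: hatPolyX].
Qed.

End ReducedBasisTails.

Theorem proposition2p14 (K : fieldType) (n : nat) (I : pred {mpoly K[n]})
    (Z : {set 'I_n}) (sigma sigma' : rel 'X_{1..n}) :
  is_ideal I ->
  (forall f, f \in I -> in_M f) ->
  term_ordering sigma -> term_ordering sigma' ->
  Z_separating_ordering sigma I Z -> Z_separating_ordering sigma' I Z ->
  forall (G G' : seq {mpoly K[n]}) (F F' : 'I_n -> {mpoly K[n]}),
  reduced_GB sigma I G -> reduced_GB sigma' I G' ->
  (forall z, z \in Z -> F z \in G /\ is_LT sigma (F z) (mnm1 z)) ->
  (forall z, z \in Z -> F' z \in G' /\ is_LT sigma' (F' z) (mnm1 z)) ->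
  forall p : {mpoly K[n]},
    Phi_lift Z F p - Phi_lift Z F' p \in I /\
    in_hatP Z (Phi_lift Z F p - Phi_lift Z F' p).
Proof.
move=> idealI _ ordS ordS' _ _ G G' F F' redG redG' leadF leadF' p.
split.
  apply: (congI_common idealI (c := p)).
    exact: Phi_lift_congI idealI ordS redG leadF p.
  exact: Phi_lift_congI idealI ordS' redG' leadF' p.
apply: hatPoly_in_hatP; apply: rpredB.
  exact: Phi_lift_hatPoly ordS redG leadF p.
exact: Phi_lift_hatPoly ordS' redG' leadF' p.
Qed.
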